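(* The cut rule is admissible: every sequent derivable using the rules (id), ($\land$), ($\lor$), ($\Box$), ($\Diamond$) and (cut) is derivable using only (id), ($\land$), ($\lor$), ($\Box$), ($\Diamond$).
   Context: Fix a countable set of atoms; each atom $\alpha$ has a dual negative atom $\alpha^\perp$. Formulas: $A,B ::= \alpha \mid \alpha^\perp \mid A\land B \mid A\lor B \mid \Box A \mid \Diamond A$. Negation $A^\perp$: $(\alpha)^\perp=\alpha^\perp$, $(\alpha^\perp)^\perp=\alpha$, $(A\land B)^\perp=A^\perp\lor B^\perp$, $(A\lor B)^\perp=A^\perp\land B^\perp$, $(\Box A)^\perp=\Diamond A^\perp$, $(\Diamond A)^\perp=\Box A^\perp$. A (nested) sequent is given by $\Gamma,\Delta ::= \cdot \mid \Gamma, A \mid \Gamma, [\Delta]$, where $\cdot$ is the empty sequent; sequents are taken up to exchange, and $\Gamma,\Delta$ denotes juxtaposition. A unary context is given by $\Gamma\{-\} ::= \Delta,\{-\} \mid \Delta,[\Gamma\{-\}]$; $\Gamma\{\Delta\}$ is the result of filling the hole with $\Delta$, and $\Gamma\{\}$ means $\Gamma\{\cdot\}$. Depth: $\mathrm{depth}(\Delta,\{-\})=0$, $\mathrm{depth}(\Delta,[\Gamma\{-\}])=\mathrm{depth}(\Gamma\{-\})+1$. Rules: (id) $\Gamma\{\alpha^\perp,\alpha\}$ with no premises ($\alpha$ an atom); ($\land$) from $\Gamma\{A\}$ and $\Gamma\{B\}$ infer $\Gamma\{A\land B\}$; ($\lor$) from $\Gamma\{A,B\}$ infer $\Gamma\{A\lor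 B\}$; ($\Box$) from $\Gamma\{[\Diamond A^\perp, A]\}$ infer $\Gamma\{\Box A\}$; ($\Diamond$) from $\Gamma\{\Delta\{A\},\Diamond A\}$ infer $\Gamma\{\Delta\{\},\Diamond A\}$, provided $\mathrm{depth}(\Delta\{-\})>0$; (cut) from $\Gamma\{A\}$ and $\Gamma\{A^\perp\}$ infer $\Gamma\{\}$. *)

From Stdlib Require Import List.
Import ListNotations.

Inductive form : Type :=
| Atom : nat -> form
| NAtom : nat -> form
| And : form -> form -> form
| Or : form -> form -> form
| Box : form -> form
| Dia : form -> form.

Fixpoint neg (A : form) : form :=
  match A with
  | Atom a => NAtom a
  | NAtom a => Atom a
  | And A B => Or (neg A) (neg B)
  | Or A B => And (neg A) (neg B)
  | Box A => Dia (neg A)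
  | Dia A => Box (neg A)
  end.

(* A nested sequent is a list of items: a formula or a bracketed sequent [Delta].
   The empty sequent is [], juxtaposition is list concatenation. *)
Inductive item : Type :=
| IF : form -> item
| IB : list item -> item.

Definition sequent := list item.

(* Unary contexts: Hole D is  D,{-} ; Nest D G is  D,[G{-}]. *)
Inductive ctx : Type :=
| Hole : sequent -> ctx
| Nest : sequent -> ctx -> ctx.

Fixpoint fill (G : ctx) (S : sequent) : sequent :=
  match G with
  | Hole D => D ++ S
  | Nest D G' => D ++ [IB (fill G' S)]
  end.

Fixpoint depth (G : ctx) : nat :=
  match G with
  | Hole _ => 0
  | Nest _ G' => S (depth G')
  end.

(* Sequents are taken up to exchange (at every nesting level):
   the least congruence containing permutation of adjacent items. *)
Inductive seq_equiv : sequent -> sequent -> Prop :=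
| se_nil : seq_equiv [] []
| se_skipF : forall A l l', seq_equiv l l' -> seq_equiv (IF A :: l) (IF A :: l')
| se_skipB : forall s s' l l', seq_equiv s s' -> seq_equiv l l' ->
    seq_equiv (IB s :: l) (IB s' :: l')
| se_swap : forall x y l, seq_equiv (x :: y :: l) (y :: x :: l)
| se_trans : forall l1 l2 l3, seq_equiv l1 l2 -> seq_equiv l2 l3 -> seq_equiv l1 l3.

Inductive derivable (withcut : bool) : sequent -> Prop :=
| r_exch : forall S S', derivable withcut S -> seq_equiv S S' -> derivable withcut S'
| r_id : forall (G : ctx) (a : nat),
    derivable withcut (fill G [IF (NAtom a); IF (Atom a)])
| r_and : forall G A B,
    derivable withcut (fill G [IF A]) -> derivable withcut (fill G [IF B]) ->
    derivable withcut (fill G [IF (And A B)])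
| r_or : forall G A B,
    derivable withcut (fill G [IF A; IF B]) ->
    derivable withcut (fill G [IF (Or A B)])
| r_box : forall G A,
    derivable withcut (fill G [IB [IF (Dia (neg A)); IF A]]) ->
    derivable withcut (fill G [IF (Box A)])
| r_dia : forall G D A, 0 < depth D ->
    derivable withcut (fill G (fill D [IF A] ++ [IF (Dia A)])) ->
    derivable withcut (fill G (fill D [] ++ [IF (Dia A)]))
| r_cut : forall G A, withcut = true ->
    derivable withcut (fill G [IF A]) -> derivable withcut (fill G [IF (neg A)]) ->
    derivable withcut (fill G []).

(* Cut is admissible because cut-free derivability is complete for the semantics for which
   the calculus with cut is sound.  The calculus is one for the provability logic GL: the (Box)
   rule encodes Löb's principle and the deep (Diamond) rule transitivity, so every derivation is
   sound for transitive, conversely well-founded Kripke frames.  Conversely, backward proof search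
   on a sequent without cut-free derivation, organised as a tree of nodes with histories, can be
   run until every node is saturated without ever reaching a derivable sequent.  It terminates:
   all formulas lie in the finite closure of the sequent under subformulas and negation, local
   steps shrink a lexicographic measure, and a new box child [Dia (neg A), A] adds the fresh
   diamond argument [neg A] to its branch (otherwise it closes by an identity).  The saturated
   tree, with the proper-descendant relation, is a transitive, conversely well-founded countermodel
   in which every formula ever placed at a node is false there, so the sequent is not valid and
   hence not derivable even with cut. *)

From Stdlib Require Import List Permutation Classical Lia Arith Wellfounded.
Import ListNotations.

Notation cutfree := (derivable false).

Fixpoint item_nested_ind (P : item -> Prop) (Q : sequent -> Prop)
  (hF : forall A, P (IF A)) (hB : forall s, Q s -> P (IB s))
  (hnil : Q []) (hcons : forall i s, P i -> Q s -> Q (i :: s)) (i : item) : P i :=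
  match i with
  | IF A => hF A
  | IB s => hB s ((fix go (s : sequent) : Q s :=
                  match s with
                  | [] => hnil
                  | j :: s' => hcons j s' (item_nested_ind P Q hF hB hnil hcons j) (go s')
                  end) s)
  end.

Lemma seq_equiv_refl s : seq_equiv s s.
Proof.
  enough (H : forall i s, seq_equiv s s -> seq_equiv (i :: s) (i :: s))
    by (induction s; [constructor | auto]).
  apply (item_nested_ind (fun i => forall s, seq_equiv s s -> seq_equiv (i :: s) (i :: s))
                         (fun s => seq_equiv s s)); intros; auto; constructor; auto.
Qed.

Lemma seq_equiv_sym s s' : seq_equiv s s' -> seq_equiv s' s.
Proof. induction 1; try (constructor; auto; fail). eapply se_trans; eauto. Qed.

Lemma seq_equiv_cons i s s' : seq_equiv s s' -> seq_equiv (i :: s) (i :: s').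
Proof. destruct i; constructor; auto using seq_equiv_refl. Qed.

Lemma seq_equiv_app s s' t t' :
  seq_equiv s s' -> seq_equiv t t' -> seq_equiv (s ++ t) (s' ++ t').
Proof.
  intros Hs Ht; apply se_trans with (s' ++ t).
  - clear Ht; induction Hs; simpl; try (constructor; auto; fail).
    + apply seq_equiv_refl.
    + eapply se_trans; eauto.
  - clear Hs; induction s'; simpl; auto using seq_equiv_cons.
Qed.

Lemma Permutation_seq_equiv s s' : Permutation s s' -> seq_equiv s s'.
Proof.
  induction 1; [constructor | auto using seq_equiv_cons | constructor | eapply se_trans; eauto].
Qed.

Lemma seq_equiv_fill G s s' : seq_equiv s s' -> seq_equiv (fill G s) (fill G s').
Proof.
  intros H; induction G; simpl; apply seq_equiv_app; auto using seq_equiv_refl.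
  repeat constructor; auto.
Qed.

Lemma derivable_equiv b s s' : derivable b s -> seq_equiv s s' -> derivable b s'.
Proof. intros; eapply r_exch; eauto. Qed.

Lemma derivable_fill_perm b G s s' :
  derivable b (fill G s) -> Permutation s s' -> derivable b (fill G s').
Proof. eauto using derivable_equiv, seq_equiv_fill, Permutation_seq_equiv. Qed.

Fixpoint ctx_comp (G H : ctx) : ctx :=
  match G with
  | Hole D => match H with Hole E => Hole (D ++ E) | Nest E H' => Nest (D ++ E) H' end
  | Nest D G' => Nest D (ctx_comp G' H)
  end.

Lemma fill_ctx_comp G H s : fill (ctx_comp G H) s = fill G (fill H s).
Proof. induction G; simpl; [destruct H; simpl; rewrite app_assoc | rewrite IHG]; auto. Qed.

Lemma cutfree_and G X A B :
  cutfree (fill G (X ++ [IF A])) -> cutfree (fill G (X ++ [IF B])) ->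
  cutfree (fill G (X ++ [IF (And A B)])).
Proof.
  change (X ++ ?s) with (fill (Hole X) s); rewrite <- !fill_ctx_comp; apply r_and.
Qed.

Lemma cutfree_or G X A B :
  cutfree (fill G (X ++ [IF A; IF B])) -> cutfree (fill G (X ++ [IF (Or A B)])).
Proof. change (X ++ ?s) with (fill (Hole X) s); rewrite <- !fill_ctx_comp; apply r_or. Qed.

Lemma cutfree_box G X A :
  cutfree (fill G (X ++ [IB [IF (Dia (neg A)); IF A]])) -> cutfree (fill G (X ++ [IF (Box A)])).
Proof. change (X ++ ?s) with (fill (Hole X) s); rewrite <- !fill_ctx_comp; apply r_box. Qed.

(** * Identity for compound formulas *)

Lemma neg_involutive A : neg (neg A) = A.
Proof. induction A; simpl; congruence. Qed.

Definition identity_derivable A := forall G, cutfree (fill G [IF (neg A); IF A]).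

Lemma identity_derivable_neg A : identity_derivable A -> identity_derivable (neg A).
Proof.
  intros HA G; rewrite neg_involutive; eapply derivable_fill_perm; [apply HA | apply perm_swap].
Qed.

Lemma identity_derivable_side A :
  identity_derivable A -> forall G X, cutfree (fill G (X ++ [IF (neg A); IF A])).
Proof.
  intros HA G X; specialize (HA (ctx_comp G (Hole X))); rewrite fill_ctx_comp in HA; exact HA.
Qed.

Lemma identity_derivable_And A B :
  identity_derivable A -> identity_derivable B -> identity_derivable (And A B).
Proof.
  intros HA HB G; simpl.
  apply (cutfree_and G [IF (Or (neg A) (neg B))]).
  - apply (derivable_fill_perm _ G [IF A; IF (Or (neg A) (neg B))]); [| apply perm_swap].
    apply (cutfree_or G [IF A]).
    apply (derivable_fill_perm _ G [IF (neg B); IF (neg A); IF A]);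
      [| simpl; eauto using Permutation].
    apply (identity_derivable_side _ HA G [IF (neg B)]).
  - apply (derivable_fill_perm _ G [IF B; IF (Or (neg A) (neg B))]); [| apply perm_swap].
    apply (cutfree_or G [IF B]).
    apply (derivable_fill_perm _ G [IF (neg A); IF (neg B); IF B]);
      [| simpl; eauto using Permutation].
    apply (identity_derivable_side _ HB G [IF (neg A)]).
Qed.

Lemma identity_derivable_Box A : identity_derivable A -> identity_derivable (Box A).
Proof.
  intros HA G; simpl.
  apply (cutfree_box G [IF (Dia (neg A))]).
  set (D := Nest [] (Hole [IF (Dia (neg A)); IF A])).
  apply (derivable_fill_perm _ G (fill D [] ++ [IF (Dia (neg A))])); [| apply perm_swap].
  apply r_dia; [simpl; lia |].
  apply (derivable_fill_perm _ G [IF (Dia (neg A)); IB [IF (Dia (neg A)); IF A; IF (neg A)]]);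
    [| apply perm_swap].
  set (G' := ctx_comp G (Nest [IF (Dia (neg A))] (Hole [IF (Dia (neg A))]))).
  pose proof (derivable_fill_perm _ G' _ [IF A; IF (neg A)] (HA G') (perm_swap _ _ _)) as H.
  unfold G' in H; rewrite fill_ctx_comp in H; exact H.
Qed.

Lemma identity_derivable_all A : identity_derivable A.
Proof.
  induction A.
  - intros G; apply r_id.
  - apply (identity_derivable_neg (Atom n)); intros G; apply r_id.
  - auto using identity_derivable_And.
  - rewrite <- (neg_involutive A1), <- (neg_involutive A2).
    apply (identity_derivable_neg (And _ _)), identity_derivable_And;
      auto using identity_derivable_neg.
  - auto using identity_derivable_Box.
  - rewrite <- (neg_involutive A).
    apply (identity_derivable_neg (Box _)), identity_derivable_Box;
      auto using identity_derivable_neg.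
Qed.

(** * Soundness for transitive, conversely well-founded frames *)

Section Kripke.
Context {W : Type} (R : W -> W -> Prop) (V : nat -> W -> Prop).

Fixpoint forces (w : W) (A : form) : Prop :=
  match A with
  | Atom a => V a w
  | NAtom a => ~ V a w
  | And A B => forces w A /\ forces w B
  | Or A B => forces w A \/ forces w B
  | Box A => forall v, R w v -> forces v A
  | Dia A => exists v, R w v /\ forces v A
  end.

Fixpoint forces_item (w : W) (i : item) : Prop :=
  match i with
  | IF A => forces w A
  | IB s => forall v, R w v -> fold_right (fun j P => forces_item v j \/ P) False s
  end.

Definition forces_seq (w : W) (s : sequent) : Prop :=
  fold_right (fun j P => forces_item w j \/ P) False s.

Lemma forces_seq_app w s t : forces_seq w (s ++ t) <-> forces_seq w s \/ forces_seq w t.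
Proof. induction s; simpl; [tauto | rewrite IHs; tauto]. Qed.

Lemma forces_seq_Exists w s : forces_seq w s <-> exists i, In i s /\ forces_item w i.
Proof.
  induction s as [| j s IH]; simpl; [firstorder |].
  rewrite IH; split; [intros [H | (i & Hi & H)]; eauto | intros (i & [<- | Hi] & H); eauto].
Qed.

Lemma forces_seq_one w i : forces_seq w [i] <-> forces_item w i.
Proof. simpl; tauto. Qed.

Lemma forces_item_IB w s : forces_item w (IB s) = forall v, R w v -> forces_seq v s.
Proof. reflexivity. Qed.

Lemma forces_seq_equiv s s' : seq_equiv s s' -> forall w, forces_seq w s -> forces_seq w s'.
Proof.
  induction 1; intros w; simpl; try tauto.
  - intros [Hw | Hw]; auto.
  - intros [Hw | Hw]; [left | right]; auto.
    intros v Hv; apply IHseq_equiv1, Hw, Hv.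
  - auto.
Qed.

Lemma forces_fill_comb (X1 X2 Y : sequent) :
  (forall v, forces_seq v X1 -> forces_seq v X2 -> forces_seq v Y) ->
  forall G w, forces_seq w (fill G X1) -> forces_seq w (fill G X2) -> forces_seq w (fill G Y).
Proof.
  intros HXY G; induction G; simpl; intros w; rewrite !forces_seq_app; simpl.
  - intros [] []; auto.
  - intros [|[H1|[]]] [|[H2|[]]]; auto.
    right; left; intros v Hv; apply IHG; [apply H1 | apply H2]; auto.
Qed.

Lemma forces_fill_mono (X Y : sequent) :
  (forall v, forces_seq v X -> forces_seq v Y) ->
  forall G w, forces_seq w (fill G X) -> forces_seq w (fill G Y).
Proof. intros H G w HX; apply (forces_fill_comb X X Y); auto. Qed.

Lemma forces_fill_valid (X : sequent) :
  (forall v, forces_seq v X) -> forall G w, forces_seq w (fill G X).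
Proof.
  intros HX G; induction G; simpl; intros w; rewrite forces_seq_app; simpl; auto.
  right; left; intros v _; apply IHG.
Qed.

Lemma forces_neg w A : forces w (neg A) <-> ~ forces w A.
Proof.
  revert w; induction A; intros w; simpl.
  - tauto.
  - split; [tauto | apply NNPP].
  - rewrite IHA1, IHA2; tauto.
  - rewrite IHA1, IHA2; tauto.
  - split.
    + intros [v [Hv Hn]] H; apply IHA in Hn; auto.
    + intros H; apply NNPP; intros H2; apply H; intros v Hv; apply NNPP; intros H3.
      apply H2; exists v; rewrite IHA; auto.
  - split.
    + intros H [v [Hv Hn]]; apply (IHA v); auto.
    + intros H v Hv; apply IHA; intros H2; apply H; eauto.
Qed.

Hypothesis R_trans : forall x y z, R x y -> R y z -> R x z.
Hypothesis R_conv_wf : well_founded (fun x y => R y x).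

Lemma forces_fill_drop_deep A D w :
  0 < depth D -> (forall u, R w u -> ~ forces u A) ->
  forces_seq w (fill D [IF A]) -> forces_seq w (fill D []).
Proof.
  revert w; induction D as [E | E D IH]; cbn [fill depth]; intros w Hd HA; [lia |].
  rewrite !forces_seq_app, !forces_seq_one, !forces_item_IB.
  intros [H | H]; [now left | right; intros v Hv; specialize (H v Hv)].
  destruct D as [E' | E' D']; cbn [fill depth] in *.
  - rewrite app_nil_r; rewrite forces_seq_app, forces_seq_one in H.
    destruct H as [H | H]; [exact H | exfalso; eapply HA; eauto].
  - apply (IH v); [lia | eauto | exact H].
Qed.

(* Löb's principle, the one place where converse well-foundedness is used. *)
Lemma forces_lob w A :
  (forall v, R w v -> forces v (Dia (neg A)) \/ forces v A) -> forces w (Box A).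
Proof.
  intros H u; induction u as [u IH] using (well_founded_ind R_conv_wf); intros Hu.
  destruct (H u Hu) as [[u' [Hu' Hn]] | HA]; auto.
  exfalso; apply forces_neg in Hn; eauto.
Qed.

Theorem derivable_sound b S : derivable b S -> forall w, forces_seq w S.
Proof.
  induction 1; intros w.
  - eauto using forces_seq_equiv.
  - apply forces_fill_valid; intros v; simpl.
    destruct (classic (V a v)); tauto.
  - apply (forces_fill_comb [IF A] [IF B]); auto; simpl; tauto.
  - apply (forces_fill_mono [IF A; IF B]); auto; simpl; tauto.
  - apply (forces_fill_mono [IB [IF (Dia (neg A)); IF A]]); auto.
    intros v; rewrite !forces_seq_one, forces_item_IB; intros Hv; apply forces_lob.
    intros u Hu; specialize (Hv u Hu); simpl in Hv; tauto.
  - apply (forces_fill_mono (fill D [IF A] ++ [IF (Dia A)])); auto.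
    intros v; rewrite !forces_seq_app, !forces_seq_one; simpl forces_item.
    destruct (classic (exists u, R v u /\ forces u A)) as [HD | HD]; [tauto |].
    intros [H' | H']; [left | tauto].
    apply (forces_fill_drop_deep A D v); eauto.
  - apply (forces_fill_comb [IF A] [IF (neg A)]); auto.
    intros v; rewrite !forces_seq_one; simpl; rewrite forces_neg; tauto.
Qed.
End Kripke.

(** * Proof-search trees *)

(* [Node c h ks] is a node with current formulas [c], history [h] (every formula ever placed
   there, including those already decomposed backwards) and children [ks]. *)
Inductive tree : Type := Node : list form -> list form -> list tree -> tree.

Definition cur t := match t with Node c _ _ => c end.
Definition hist t := match t with Node _ h _ => h end.
Definition kids t := match t with Node _ _ ks => ks end.

Fixpoint tree_nested_ind (P : tree -> Prop)
  (hN : forall c h ks, (forall k, In k ks -> P k) -> P (Node c h ks)) (t : tree) : P t :=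
  match t with
  | Node c h ks => hN c h ks
      ((fix go (l : list tree) : forall k, In k l -> P k :=
          match l with
          | [] => fun k H => False_ind _ H
          | k' :: l' => fun k H =>
              match H with
              | or_introl e => eq_ind k' P (tree_nested_ind P hN k') k e
              | or_intror H' => go l' k H'
              end
          end) ks)
  end.

Fixpoint size (t : tree) : nat :=
  match t with Node _ _ ks => S (list_sum (map size ks)) end.

Lemma size_kid c h ks k : In k ks -> size k < size (Node c h ks).
Proof.
  simpl; induction ks as [| k' ks IH]; simpl; [tauto |].
  intros [<- | Hk]; [| specialize (IH Hk)]; lia.
Qed.

Fixpoint erase (t : tree) : sequent :=
  match t with Node c _ ks => map IF c ++ map (fun k => IB (erase k)) ks end.

Definition bracket (k : tree) : item := IB (erase k).

Lemma erase_node c h ks : erase (Node c h ks) = map IF c ++ map bracket ks.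
Proof. reflexivity. Qed.

(* [Fr c h l r] is a node with a hole among its children, between the siblings [l] and [r]. *)
Inductive frame : Type := Fr : list form -> list form -> list tree -> list tree -> frame.

Fixpoint plug (C : list frame) (t : tree) : tree :=
  match C with
  | [] => t
  | Fr c h l r :: C' => Node c h (l ++ plug C' t :: r)
  end.

Lemma plug_app C1 C2 t : plug (C1 ++ C2) t = plug C1 (plug C2 t).
Proof. induction C1 as [| [] C1 IH]; simpl; congruence. Qed.

Fixpoint path_ctx (C : list frame) (d : sequent) : ctx :=
  match C with
  | [] => Hole d
  | Fr c h l r :: C' => Nest (map IF c ++ map bracket l ++ map bracket r) (path_ctx C' d)
  end.

Lemma fill_path_ctx C d X : fill (path_ctx C d) X = fill (path_ctx C []) (d ++ X).
Proof. induction C as [| [] C IH]; simpl; congruence. Qed.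

Lemma erase_plug C t : seq_equiv (erase (plug C t)) (fill (path_ctx C []) (erase t)).
Proof.
  induction C as [| [c h l r] C IH]; simpl; [apply seq_equiv_refl |].
  rewrite map_app; cbn [map].
  apply se_trans with (map IF c ++ map bracket l ++ map bracket r ++ [IB (erase (plug C t))]).
  - apply Permutation_seq_equiv; apply Permutation_app_head, Permutation_app_head.
    apply Permutation_cons_append.
  - rewrite !app_assoc; apply seq_equiv_app; [apply seq_equiv_refl | repeat constructor; auto].
Qed.

Lemma erase_plug_equiv C t d X : seq_equiv (erase t) (d ++ X) ->
  seq_equiv (erase (plug C t)) (fill (path_ctx C d) X).
Proof.
  intros Ht; eapply se_trans; [apply erase_plug |].
  rewrite (fill_path_ctx C d X); apply seq_equiv_fill, Ht.
Qed.

Lemma cutfree_plug_iff C t d X : Permutation (erase t) (d ++ X) ->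
  cutfree (erase (plug C t)) <-> cutfree (fill (path_ctx C d) X).
Proof.
  intros Ht.
  assert (E := erase_plug_equiv C t d X (Permutation_seq_equiv _ _ Ht)).
  split; intros; eapply derivable_equiv; eauto using seq_equiv_sym.
Qed.

Definition underivable_at (C : list frame) (t : tree) : Prop := ~ cutfree (erase (plug C t)).

Lemma erase_pick c1 X c2 h ks :
  Permutation (erase (Node (c1 ++ X :: c2) h ks)) ((map IF (c1 ++ c2) ++ map bracket ks) ++ [IF X]).
Proof.
  rewrite erase_node, !map_app, <- !app_assoc; cbn [map app].
  apply Permutation_app_head; rewrite app_assoc; apply Permutation_cons_append.
Qed.

Lemma erase_push Xs c h ks :
  Permutation (erase (Node (Xs ++ c) h ks)) ((map IF c ++ map bracket ks) ++ map IF Xs).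
Proof. rewrite erase_node, map_app, <- app_assoc; apply Permutation_app_comm. Qed.

Lemma underivable_and C c1 c2 A B h ks h1 h2 :
  underivable_at C (Node (c1 ++ And A B :: c2) h ks) ->
  underivable_at C (Node (A :: c1 ++ c2) h1 ks) \/ underivable_at C (Node (B :: c1 ++ c2) h2 ks).
Proof.
  unfold underivable_at.
  intros H; apply NNPP; intros Hn; apply H.
  rewrite (cutfree_plug_iff C _ _ _ (erase_pick c1 _ c2 h ks)).
  apply r_and; apply NNPP; intros HX; apply Hn; [left | right].
  - rewrite (cutfree_plug_iff C _ _ _ (erase_push [A] (c1 ++ c2) h1 ks)); exact HX.
  - rewrite (cutfree_plug_iff C _ _ _ (erase_push [B] (c1 ++ c2) h2 ks)); exact HX.
Qed.

Lemma underivable_or C c1 c2 A B h ks h1 :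
  underivable_at C (Node (c1 ++ Or A B :: c2) h ks) ->
  underivable_at C (Node (A :: B :: c1 ++ c2) h1 ks).
Proof.
  unfold underivable_at.
  intros H Hd; apply H.
  rewrite (cutfree_plug_iff C _ _ _ (erase_pick c1 _ c2 h ks)); apply r_or.
  rewrite <- (cutfree_plug_iff C _ _ _ (erase_push [A; B] (c1 ++ c2) h1 ks)); exact Hd.
Qed.

Lemma underivable_box C c1 c2 A h ks h1 hk :
  underivable_at C (Node (c1 ++ Box A :: c2) h ks) ->
  underivable_at C (Node (c1 ++ c2) h1 (ks ++ [Node [Dia (neg A); A] hk []])).
Proof.
  unfold underivable_at.
  intros H Hd; apply H.
  rewrite (cutfree_plug_iff C _ _ _ (erase_pick c1 _ c2 h ks)); apply r_box.
  rewrite <- cutfree_plug_iff; [exact Hd |].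
  rewrite erase_node, (map_app bracket), app_assoc; reflexivity.
Qed.

Lemma in_Permutation_cons {T} (x : T) l : In x l -> exists l', Permutation l (x :: l').
Proof.
  intros Hx; destruct (in_split _ _ Hx) as [l1 [l2 ->]].
  exists (l1 ++ l2); symmetry; apply Permutation_middle.
Qed.

Lemma neg_neq A : neg A <> A.
Proof. destruct A; discriminate. Qed.

Lemma cutfree_clash C c h ks A :
  In A c -> In (neg A) c -> cutfree (erase (plug C (Node c h ks))).
Proof.
  intros HA HnA.
  destruct (in_Permutation_cons _ _ HA) as [c' Hc].
  assert (Hn : In (neg A) c') by
    (apply (Permutation_in _ Hc) in HnA; destruct HnA as [E |]; [now destruct (neg_neq A) | auto]).
  destruct (in_Permutation_cons _ _ Hn) as [c'' Hc'].
  rewrite (cutfree_plug_iff C _ (map IF c'' ++ map bracket ks) [IF (neg A); IF A]);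
    [apply identity_derivable_all |].
  rewrite erase_node, Hc, Hc'; cbn [map app].
  rewrite perm_swap; apply (Permutation_app_comm [_; _]).
Qed.

Definition dia_args (c : list form) : list form :=
  flat_map (fun A => match A with Dia B => [B] | _ => [] end) c.

Lemma in_dia_args B c : In B (dia_args c) <-> In (Dia B) c.
Proof.
  unfold dia_args; rewrite in_flat_map; split.
  - intros [[] [HA HB]]; simpl in HB; try tauto.
    destruct HB as [<- | []]; auto.
  - intros H; exists (Dia B); simpl; auto.
Qed.

Definition frame_cur (F : frame) := match F with Fr c _ _ _ => c end.

(* The formulas that the (Diamond) rule can deliver to the hole at the end of the path [C]. *)
Definition path_dias (C : list frame) : list form := flat_map (fun F => dia_args (frame_cur F)) C.

Lemma path_dias_snoc C c h l r : path_dias (C ++ [Fr c h l r]) = path_dias C ++ dia_args c.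
Proof. unfold path_dias; rewrite flat_map_app; simpl; rewrite app_nil_r; auto. Qed.

Lemma erase_frame_dia C fc fc' fh l r B t d Z :
  Permutation fc (Dia B :: fc') -> seq_equiv (erase t) (d ++ Z) ->
  seq_equiv (erase (Node fc fh (l ++ plug C t :: r)))
    (fill (Nest (map IF fc' ++ map bracket l ++ map bracket r) (path_ctx C d)) Z ++ [IF (Dia B)]).
Proof.
  intros Hfc Ht; rewrite erase_node, map_app; cbn [map fill].
  apply se_trans with
    ((map IF fc' ++ map bracket l ++ map bracket r) ++ [bracket (plug C t)] ++ [IF (Dia B)]).
  - apply Permutation_seq_equiv; rewrite Hfc; cbn [map].
    rewrite (app_assoc _ [_] [_]), <- Permutation_cons_append; cbn [app]; apply perm_skip.
    rewrite app_assoc, <- Permutation_middle, <- app_assoc; apply Permutation_cons_append.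
  - rewrite app_assoc; apply seq_equiv_app; [| apply seq_equiv_refl].
    apply seq_equiv_app; [apply seq_equiv_refl |].
    repeat constructor; apply erase_plug_equiv, Ht.
Qed.

Lemma underivable_dia C c h ks B h1 : In B (path_dias C) ->
  underivable_at C (Node c h ks) -> underivable_at C (Node (B :: c) h1 ks).
Proof.
  unfold underivable_at.
  intros HB H Hd; apply H.
  unfold path_dias in HB; apply in_flat_map in HB as [[fc fh l r] [HF HB]].
  apply in_dia_args in HB; destruct (in_Permutation_cons _ _ HB) as [fc' Hfc].
  destruct (in_split _ _ HF) as [C1 [C2 ->]]; rewrite plug_app in Hd |- *; cbn [plug] in Hd |- *.
  set (t := Node c h ks).
  set (D := Nest (map IF fc' ++ map bracket l ++ map bracket r) (path_ctx C2 (erase t))).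
  apply (derivable_equiv _ (fill (path_ctx C1 []) (fill D [] ++ [IF (Dia B)]))).
  - apply r_dia; [simpl; lia |].
    eapply derivable_equiv; [exact Hd |].
    apply erase_plug_equiv, (erase_frame_dia _ _ _ _ _ _ _ _ (erase t) [IF B] Hfc).
    apply Permutation_seq_equiv, Permutation_cons_append.
  - apply seq_equiv_sym, erase_plug_equiv, (erase_frame_dia _ _ _ _ _ _ _ _ (erase t) [] Hfc).
    rewrite app_nil_r; apply seq_equiv_refl.
Qed.

(** * Saturation *)

Record closed (Sg : list form) : Prop := {
  closed_and A B : In (And A B) Sg -> In A Sg /\ In B Sg;
  closed_or A B : In (Or A B) Sg -> In A Sg /\ In B Sg;
  closed_box A : In (Box A) Sg -> In (Dia (neg A)) Sg /\ In A Sg;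
  closed_dia A : In (Dia A) Sg -> In A Sg }.

(* Every formula of the history that is no longer current has been decomposed, and its
   decomposition is recorded in the history of the node or of one of its children. *)
Record node_inv (Sg c h : list form) (ks : list tree) : Prop := {
  inv_cur : incl c h;
  inv_hist : incl h Sg;
  inv_and A B : In (And A B) h -> In (And A B) c \/ In A h \/ In B h;
  inv_or A B : In (Or A B) h -> In (Or A B) c \/ In A h /\ In B h;
  inv_box A : In (Box A) h -> In (Box A) c \/ exists k, In k ks /\ In A (hist k);
  inv_dia A : In (Dia A) h -> In (Dia A) c;
  inv_atom a : In (Atom a) h -> In (Atom a) c;
  inv_natom a : In (NAtom a) h -> In (NAtom a) c }.

Definition decomposed (h : list form) (ks : list tree) (Y : form) : Prop :=
  match Y with
  | And A B => In A h \/ In B h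
  | Or A B => In A h /\ In B h
  | Box A => exists k, In k ks /\ In A (hist k)
  | _ => False
  end.

Lemma node_inv_step Sg c h ks c' h' ks' : node_inv Sg c h ks ->
  incl h h' -> incl ks ks' -> incl c' h' -> incl h' Sg ->
  (forall Y, In Y h' -> In Y h \/ In Y c') ->
  (forall Y, In Y c -> In Y c' \/ decomposed h' ks' Y) ->
  node_inv Sg c' h' ks'.
Proof.
  intros [Hc Hhs Hand Hor Hbox Hdia Hat Hnat] Hh Hks Hc' Hh' Hnew Hold.
  split; auto; intros *; intros [HY | HY]%Hnew; auto.
  - destruct (Hand _ _ HY) as [[|]%Hold | [|]]; auto.
  - destruct (Hor _ _ HY) as [[|]%Hold | []]; auto.
  - destruct (Hbox _ HY) as [[|[k []]]%Hold | [k []]]; eauto.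
  - destruct (Hold _ (Hdia _ HY)) as [| []]; auto.
  - destruct (Hold _ (Hat _ HY)) as [| []]; auto.
  - destruct (Hold _ (Hnat _ HY)) as [| []]; auto.
Qed.

Lemma node_inv_init Sg c ks : incl c Sg -> node_inv Sg c c ks.
Proof. split; auto using incl_refl. Qed.

Lemma node_inv_extend_kids Sg c h ks ks' : node_inv Sg c h ks ->
  (forall k, In k ks -> exists k', In k' ks' /\ incl (hist k) (hist k')) -> node_inv Sg c h ks'.
Proof.
  intros [Hc Hhs Hand Hor Hbox Hdia Hat Hnat] Hks; split; auto.
  intros A [| [k [Hk HA]]]%Hbox; auto.
  destruct (Hks k Hk) as [k' []]; eauto.
Qed.

Lemma lex_nat_ind (P : nat -> nat -> Prop) :
  (forall m n, (forall m' n', m' < m \/ m' <= m /\ n' < n -> P m' n') -> P m n) ->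
  forall m n, P m n.
Proof.
  intros H m; induction m as [m IHm] using lt_wf_ind; intros n.
  induction n as [n IHn] using lt_wf_ind.
  apply H; intros m' n' [Hm | [Hm Hn]]; auto.
  destruct (Nat.eq_dec m' m) as [-> | Hne]; [auto | apply IHm; lia].
Qed.

Lemma filter_length_mono {T} (f g : T -> bool) l :
  (forall x, In x l -> f x = true -> g x = true) -> length (filter f l) <= length (filter g l).
Proof.
  induction l as [| a l IH]; simpl; intros H; auto.
  specialize (IH (fun x Hx => H x (or_intror Hx))).
  destruct (f a) eqn:Ef; [rewrite (H a (or_introl eq_refl) Ef) |]; destruct (g a); simpl; lia.
Qed.

Lemma filter_length_strict {T} (f g : T -> bool) l x :
  (forall x, In x l -> f x = true -> g x = true) -> In x l -> f x = false -> g x = true ->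
  length (filter f l) < length (filter g l).
Proof.
  induction l as [| a l IH]; simpl; intros H Hx Hf Hg; [tauto |].
  pose proof (filter_length_mono f g l (fun y Hy => H y (or_intror Hy))).
  destruct Hx as [-> | Hx].
  - rewrite Hf, Hg; simpl; lia.
  - specialize (IH (fun y Hy => H y (or_intror Hy)) Hx Hf Hg).
    destruct (f a) eqn:Ef; [rewrite (H a (or_introl eq_refl) Ef) |]; destruct (g a); simpl; lia.
Qed.

Lemma form_eq_dec (A B : form) : {A = B} + {A <> B}.
Proof. decide equality; apply Nat.eq_dec. Qed.

Definition missing (Sg L : list form) : nat :=
  length (filter (fun x => if in_dec form_eq_dec x L then false else true) Sg).

Lemma missing_antitone Sg L1 L2 : incl L1 L2 -> missing Sg L2 <= missing Sg L1.
Proof.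
  intros H; apply filter_length_mono; intros x _.
  destruct (in_dec form_eq_dec x L1), (in_dec form_eq_dec x L2); auto.
Qed.

Lemma missing_strict Sg L1 L2 x : incl L1 L2 -> In x Sg -> In x L2 -> ~ In x L1 ->
  missing Sg L2 < missing Sg L1.
Proof.
  intros H HS H2 H1; apply (filter_length_strict _ _ _ x); auto.
  - intros y _; destruct (in_dec form_eq_dec y L1), (in_dec form_eq_dec y L2); auto.
  - destruct (in_dec form_eq_dec x L2); tauto.
  - destruct (in_dec form_eq_dec x L1); tauto.
Qed.

Fixpoint fsize (A : form) : nat :=
  match A with
  | Atom _ | NAtom _ => 1
  | And A B | Or A B => S (fsize A + fsize B)
  | Box A | Dia A => S (fsize A)
  end.

Definition weight (c : list form) : nat := list_sum (map fsize c).

Lemma weight_app c1 c2 : weight (c1 ++ c2) = weight c1 + weight c2.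
Proof. unfold weight; rewrite map_app, list_sum_app; auto. Qed.

Lemma weight_cons A c : weight (A :: c) = fsize A + weight c.
Proof. reflexivity. Qed.

Lemma incl_app_elt {T} (l1 l2 : list T) x : incl (l1 ++ l2) (l1 ++ x :: l2).
Proof. intros y; rewrite !in_app_iff; simpl; tauto. Qed.

Lemma dia_args_incl c c' :
  (forall D, In (Dia D) c -> In (Dia D) c') -> incl (dia_args c) (dia_args c').
Proof. intros H x; rewrite !in_dia_args; auto. Qed.

Lemma dia_args_elt c1 c2 X : (forall D, X <> Dia D) ->
  incl (dia_args (c1 ++ X :: c2)) (dia_args (c1 ++ c2)).
Proof.
  intros HX; apply dia_args_incl; intros D [E | HD]%in_elt_inv; [now destruct (HX D) | exact HD].
Qed.

Definition box_node (A : form) : tree := Node [Dia (neg A); A] [Dia (neg A); A] [].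

Definition box_child (Sg : list form) (k : tree) : Prop :=
  exists A, In (Box A) Sg /\ k = box_node A.

Record node_grows (Sg c h : list form) (ks : list tree) (c' h' : list form) (ks' : list tree) :
  Prop := {
  grows_hist : incl h h';
  grows_kids : incl ks ks';
  grows_new_kids k : In k ks' -> In k ks \/ box_child Sg k;
  grows_dias : incl (dia_args c) (dia_args c') }.

Lemma node_grows_refl Sg c h ks : node_grows Sg c h ks c h ks.
Proof. split; auto using incl_refl. Qed.

Lemma node_grows_trans Sg c h ks c' h' ks' c'' h'' ks'' :
  node_grows Sg c h ks c' h' ks' -> node_grows Sg c' h' ks' c'' h'' ks'' ->
  node_grows Sg c h ks c'' h'' ks''.
Proof.
  intros [Hh Hks Hnew Hd] [Hh' Hks' Hnew' Hd']; split; eauto using incl_tran.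
  intros k [Hk |]%Hnew'; auto.
Qed.

Definition locally_saturated (Ds c h : list form) : Prop :=
  (forall A B, ~ In (And A B) c) /\ (forall A B, ~ In (Or A B) c) /\ (forall A, ~ In (Box A) c) /\
  incl Ds h.

Section LocalSaturation.
Variables (Sg : list form) (C : list frame).
Hypothesis Sg_closed : closed Sg.
Hypothesis path_dias_Sg : incl (path_dias C) Sg.

Definition makes_progress (c h : list form) (ks : list tree) : Prop :=
  exists c' h' ks', node_grows Sg c h ks c' h' ks' /\
    (missing Sg h' < missing Sg h \/ missing Sg h' <= missing Sg h /\ weight c' < weight c) /\
    node_inv Sg c' h' ks' /\ underivable_at C (Node c' h' ks').

Lemma progress_dia c h ks B : node_inv Sg c h ks -> underivable_at C (Node c h ks) ->
  In B (path_dias C) -> ~ In B h -> makes_progress c h ks.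
Proof.
  intros Hinv Hu HB HBh; exists (B :: c), (B :: h), ks; split; [| split; [| split]].
  - split; auto using incl_tl, incl_refl.
    apply dia_args_incl; simpl; auto.
  - left; apply (missing_strict _ _ _ B); simpl; auto using incl_tl, incl_refl.
  - apply (node_inv_step _ _ _ _ _ _ _ Hinv); auto using incl_refl, incl_tl.
    + apply incl_cons; [now left | apply incl_tl, Hinv].
    + apply incl_cons; [auto | apply Hinv].
    + intros Y [<- | HY]; simpl; auto.
    + intros Y HY; simpl; auto.
  - apply (underivable_dia C c h ks B (B :: h) HB Hu).
Qed.

Lemma progress_replace c1 Z c2 h ks Xs ks' :
  node_inv Sg (c1 ++ Z :: c2) h ks -> (forall D, Z <> Dia D) -> incl Xs Sg ->
  weight Xs < fsize Z -> incl ks ks' -> (forall k, In k ks' -> In k ks \/ box_child Sg k) ->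
  decomposed (Xs ++ h) ks' Z -> underivable_at C (Node (Xs ++ c1 ++ c2) (Xs ++ h) ks') ->
  makes_progress (c1 ++ Z :: c2) h ks.
Proof.
  intros Hinv HZ HXs Hw Hks Hnew Hdec Hu; exists (Xs ++ c1 ++ c2), (Xs ++ h), ks'.
  assert (Hc : incl (c1 ++ c2) h) by (eapply incl_tran; [apply incl_app_elt | apply Hinv]).
  split; [| split; [| split]]; auto.
  - split; auto using incl_appr, incl_refl.
    eapply incl_tran; [apply dia_args_elt, HZ |]; apply dia_args_incl.
    intros D; rewrite !in_app_iff; tauto.
  - right; split; [apply missing_antitone, incl_appr, incl_refl |].
    rewrite !weight_app, weight_cons; lia.
  - apply (node_inv_step _ _ _ _ _ _ _ Hinv); auto using incl_appr, incl_refl.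
    + apply incl_app; [apply incl_appl, incl_refl | apply incl_appr, Hc].
    + apply incl_app; [exact HXs | apply Hinv].
    + intros Y; rewrite !in_app_iff; tauto.
    + intros Y [-> | HY]%in_elt_inv; [now right | left; apply in_or_app; auto].
Qed.

Lemma progress_and c1 A B c2 h ks : node_inv Sg (c1 ++ And A B :: c2) h ks ->
  underivable_at C (Node (c1 ++ And A B :: c2) h ks) -> makes_progress (c1 ++ And A B :: c2) h ks.
Proof.
  intros Hinv Hu.
  destruct (closed_and _ Sg_closed A B) as [HA HB]; [apply Hinv, Hinv, in_elt |].
  destruct (underivable_and C c1 c2 A B h ks (A :: h) (B :: h) Hu) as [H | H];
    [apply (progress_replace _ _ _ _ _ [A] ks) | apply (progress_replace _ _ _ _ _ [B] ks)];
    simpl; auto using incl_refl; try discriminate;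
    try (intros x [<- | []]; auto); unfold weight; simpl; lia.
Qed.

Lemma progress_or c1 A B c2 h ks : node_inv Sg (c1 ++ Or A B :: c2) h ks ->
  underivable_at C (Node (c1 ++ Or A B :: c2) h ks) -> makes_progress (c1 ++ Or A B :: c2) h ks.
Proof.
  intros Hinv Hu.
  destruct (closed_or _ Sg_closed A B) as [HA HB]; [apply Hinv, Hinv, in_elt |].
  apply (progress_replace _ _ _ _ _ [A; B] ks); simpl; auto using incl_refl; try discriminate.
  - intros x [<- | [<- | []]]; auto.
  - unfold weight; simpl; lia.
  - exact (underivable_or C c1 c2 A B h ks (A :: B :: h) Hu).
Qed.

Lemma progress_box c1 A c2 h ks : node_inv Sg (c1 ++ Box A :: c2) h ks ->
  underivable_at C (Node (c1 ++ Box A :: c2) h ks) -> makes_progress (c1 ++ Box A :: c2) h ks.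
Proof.
  intros Hinv Hu.
  assert (HA : In (Box A) Sg) by (apply Hinv, Hinv, in_elt).
  apply (progress_replace _ _ _ _ _ [] (ks ++ [box_node A]));
    simpl; auto using incl_appl, incl_refl; try discriminate.
  - intros x [].
  - unfold weight; simpl; lia.
  - intros k' [| [<- | []]]%in_app_iff; [auto | right; exists A; auto].
  - exists (box_node A); split; [apply in_elt | simpl; auto].
  - exact (underivable_box C c1 c2 A h ks h [Dia (neg A); A] Hu).
Qed.

Definition locally_saturable (c h : list form) (ks : list tree) : Prop :=
  exists c' h' ks', node_grows Sg c h ks c' h' ks' /\ locally_saturated (path_dias C) c' h' /\
    node_inv Sg c' h' ks' /\ underivable_at C (Node c' h' ks').

Lemma local_saturation c h ks :
  node_inv Sg c h ks -> underivable_at C (Node c h ks) -> locally_saturable c h ks.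
Proof.
  enough (H : forall m n c h ks, missing Sg h = m -> weight c = n -> node_inv Sg c h ks ->
    underivable_at C (Node c h ks) -> locally_saturable c h ks) by eauto.
  clear c h ks; intros m n; pattern m, n; revert m n; apply lex_nat_ind.
  intros m n IH c h ks <- <- Hinv Hu.
  assert (Hstep : makes_progress c h ks -> locally_saturable c h ks).
  { intros (c' & h' & ks' & Hg & Hlt & Hinv' & Hu').
    destruct (IH _ _ Hlt c' h' ks' eq_refl eq_refl Hinv' Hu') as (c'' & h'' & ks'' & Hg' & Hrest).
    exists c'', h'', ks''; eauto using node_grows_trans. }
  destruct (classic (exists B, In B (path_dias C) /\ ~ In B h)) as [[B [HB HBh]] | Hdel].
  { apply Hstep, (progress_dia _ _ _ B); auto. }
  destruct (classic (exists A B, In (And A B) c)) as [(A & B & HAB) | Hand].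
  { destruct (in_split _ _ HAB) as (c1 & c2 & ->); apply Hstep, progress_and; auto. }
  destruct (classic (exists A B, In (Or A B) c)) as [(A & B & HAB) | Hor].
  { destruct (in_split _ _ HAB) as (c1 & c2 & ->); apply Hstep, progress_or; auto. }
  destruct (classic (exists A, In (Box A) c)) as [(A & HA) | Hbox].
  { destruct (in_split _ _ HA) as (c1 & c2 & ->); apply Hstep, progress_box; auto. }
  exists c, h, ks; split; [apply node_grows_refl | split; [| auto]].
  split; [| split; [| split]]; eauto.
  intros B HB; apply NNPP; eauto.
Qed.
End LocalSaturation.

Inductive all_nodes (P : list form -> list form -> list tree -> Prop) : tree -> Prop :=
  all_nodes_node c h ks :
    P c h ks -> (forall k, In k ks -> all_nodes P k) -> all_nodes P (Node c h ks).

(* [Ds] collects the diamond arguments of the ancestors, which every saturated node contains. *)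
Inductive saturated (Sg : list form) : list form -> tree -> Prop :=
  saturated_node Ds c h ks :
    locally_saturated Ds c h -> (forall a, In (Atom a) h -> ~ In (NAtom a) h) ->
    node_inv Sg c h ks -> (forall k, In k ks -> saturated Sg (Ds ++ dia_args c) k) ->
    saturated Sg Ds (Node c h ks).

Inductive extends : tree -> tree -> Prop :=
  extends_node c h ks c' h' ks' : incl h h' ->
    (forall k, In k ks -> exists k', In k' ks' /\ extends k k') ->
    extends (Node c h ks) (Node c' h' ks').

Lemma extends_hist t t' : extends t t' -> incl (hist t) (hist t').
Proof. destruct 1; auto. Qed.

Definition saturable (Sg : list form) (C : list frame) (t : tree) : Prop :=
  incl (path_dias C) Sg -> all_nodes (node_inv Sg) t -> underivable_at C t ->
  exists t', extends t t' /\ saturated Sg (path_dias C) t' /\ underivable_at C t'.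

Lemma saturate_kids Sg C c h r : forall l,
  (forall k, In k r -> forall l r', saturable Sg (C ++ [Fr c h l r']) k) ->
  incl (path_dias C ++ dia_args c) Sg -> (forall k, In k r -> all_nodes (node_inv Sg) k) ->
  underivable_at C (Node c h (l ++ r)) ->
  exists r', (forall k, In k r -> exists k', In k' r' /\ extends k k') /\
    (forall k', In k' r' -> saturated Sg (path_dias C ++ dia_args c) k') /\
    underivable_at C (Node c h (l ++ r')).
Proof.
  induction r as [| k r IH]; intros l Hsat HS Hall Hu.
  { exists []; repeat split; auto; intros _ []. }
  unfold underivable_at in Hu; replace (plug C (Node c h (l ++ k :: r)))
    with (plug (C ++ [Fr c h l r]) k) in Hu by (rewrite plug_app; reflexivity).
  destruct (Hsat k (or_introl eq_refl) l r) as (k' & Hk' & Hsk' & Hu');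
    [rewrite path_dias_snoc; exact HS | apply Hall; now left | exact Hu |].
  rewrite path_dias_snoc in Hsk'; unfold underivable_at in Hu'; rewrite plug_app in Hu'.
  destruct (IH (l ++ [k'])) as (r' & Hext & Hsat' & Hu'');
    [intros; apply Hsat; now right | exact HS | intros; apply Hall; now right
    | unfold underivable_at; rewrite <- app_assoc; exact Hu' |].
  exists (k' :: r'); split; [| split].
  - intros k0 [<- | Hk0]; [exists k'; simpl; auto |].
    destruct (Hext k0 Hk0) as (k1 & ? & ?); exists k1; simpl; auto.
  - intros k0 [<- | Hk0]; auto.
  - rewrite <- app_assoc in Hu''; exact Hu''.
Qed.

(* This is what makes the search terminate: a new box child adds a new diamond argument to
   its path. *)
Lemma box_child_fresh_dia C A :
  underivable_at C (box_node A) -> ~ In (neg A) (path_dias C).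
Proof.
  intros Hu Hin; apply (underivable_dia C _ _ _ (neg A) [] Hin Hu).
  apply (cutfree_clash _ _ _ _ A); simpl; auto.
Qed.

Lemma box_child_inv Sg k : closed Sg -> box_child Sg k -> all_nodes (node_inv Sg) k.
Proof.
  intros Hcl (A & HA & ->); destruct (closed_box _ Hcl A HA).
  constructor; [apply node_inv_init | intros _ []]; intros x [<- | [<- | []]]; auto.
Qed.

Lemma saturated_of_kids Sg C Ds c h ks ks' :
  locally_saturated Ds c h -> node_inv Sg c h ks ->
  (forall k, In k ks -> exists k', In k' ks' /\ extends k k') ->
  (forall k', In k' ks' -> saturated Sg (Ds ++ dia_args c) k') ->
  underivable_at C (Node c h ks') -> saturated Sg Ds (Node c h ks').
Proof.
  intros Hls Hinv Hext Hsat Hu.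
  assert (Hinv' : node_inv Sg c h ks').
  { apply (node_inv_extend_kids _ _ _ ks); auto.
    intros k Hk; destruct (Hext k Hk) as (k' & ? & ?); eauto using extends_hist. }
  constructor; auto.
  intros a Ha HNa; apply Hu, (cutfree_clash _ _ _ _ (Atom a)); apply Hinv'; auto.
Qed.

Theorem saturation Sg : closed Sg -> forall C t, saturable Sg C t.
Proof.
  intros Hcl.
  enough (H : forall m n C t, missing Sg (path_dias C ++ dia_args (cur t)) = m -> size t = n ->
    saturable Sg C t) by eauto.
  intros m n; pattern m, n; revert m n; apply lex_nat_ind.
  intros m n IH C [c0 h0 ks0] <- <- HC Hall Hu; inversion Hall as [? ? ? Hinv0 Hkids]; subst.
  destruct (local_saturation Sg C Hcl HC c0 h0 ks0 Hinv0 Hu)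
    as (c & h & ks & Hg & Hls & Hinv & Hu').
  assert (HcS : incl (path_dias C ++ dia_args c) Sg).
  { apply incl_app; auto; intros B HB%in_dia_args; apply (closed_dia _ Hcl), Hinv, Hinv, HB. }
  assert (Hdias : forall l r, incl (path_dias C ++ dia_args c0) (path_dias (C ++ [Fr c h l r]))).
  { intros l r; rewrite path_dias_snoc; apply incl_app; [apply incl_appl, incl_refl |].
    apply incl_appr, Hg. }
  destruct (saturate_kids Sg C c h ks []) as (ks' & Hext & Hsat & Hu''); auto.
  - intros k Hk l r HC' Hallk Huk.
    apply (IH (missing Sg (path_dias (C ++ [Fr c h l r]) ++ dia_args (cur k))) (size k)); auto.
    destruct (grows_new_kids _ _ _ _ _ _ _ Hg k Hk) as [Hk0 | (A & HA & ->)].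
    + right; split; [apply missing_antitone, incl_appl, Hdias | apply size_kid; auto].
    + left; destruct (closed_box _ Hcl A HA) as [Hd _].
      apply (missing_strict _ _ _ (neg A)); [apply incl_appl, Hdias | | |].
      * apply (closed_dia _ Hcl), Hd.
      * apply in_or_app; right; apply in_dia_args; simpl; auto.
      * intros Hin; apply (box_child_fresh_dia _ A Huk), Hdias, Hin.
  - intros k Hk; destruct (grows_new_kids _ _ _ _ _ _ _ Hg k Hk) as [Hk0 | Hbox];
      [auto | apply box_child_inv; auto].
  - exists (Node c h ks'); split; [| split; [apply (saturated_of_kids _ C _ _ _ ks) |]]; auto.
    constructor; [apply Hg |].
    intros k Hk; apply Hext, (grows_kids _ _ _ _ _ _ _ Hg), Hk.
Qed.


(** * The countermodel *)

Inductive desc : tree -> tree -> Prop :=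
| desc_kid t u : In u (kids t) -> desc t u
| desc_step t u v : In u (kids t) -> desc u v -> desc t v.

Lemma desc_trans x y z : desc x y -> desc y z -> desc x z.
Proof. induction 1; intros; eapply desc_step; eauto. Qed.

Lemma desc_size t u : desc t u -> size u < size t.
Proof.
  induction 1 as [[c h ks] u Hu | [c h ks] u v Hu _ IH]; simpl in Hu;
    pose proof (size_kid c h ks u Hu); lia.
Qed.

Lemma desc_conv_wf : well_founded (fun x y => desc y x).
Proof.
  apply (wf_incl _ _ (fun x y => size x < size y)); [intros x y; apply desc_size |].
  apply (well_founded_ltof tree size).
Qed.

(* An atom is true exactly where its negation has been recorded, so that every formula in
   the history of a saturated node is false there. *)
Definition atom_val (a : nat) (u : tree) : Prop := In (NAtom a) (hist u).

Lemma saturated_desc Sg Ds t v : desc t v -> saturated Sg Ds t ->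
  exists Ds', saturated Sg Ds' v /\ incl (Ds ++ dia_args (cur t)) Ds'.
Proof.
  intros H; revert Ds; induction H as [[c h ks] u Hu | [c h ks] u v Hu _ IH]; intros Ds HS;
    inversion HS as [? ? ? ? _ _ _ Hkids]; subst; simpl in *.
  - exists (Ds ++ dia_args c); auto using incl_refl.
  - destruct (IH _ (Hkids u Hu)) as (Ds' & ? & ?); exists Ds'; split; auto.
    eapply incl_tran; [apply incl_appl, incl_refl | eauto].
Qed.

Lemma saturated_hist_false Sg F : forall Ds u, saturated Sg Ds u -> In F (hist u) ->
  ~ forces desc atom_val u F.
Proof.
  induction F as [a | a | A IHA B IHB | A IHA B IHB | A IHA | A IHA]; intros Ds u HS HF;
    inversion HS as [? c h ks (Hand & Hor & Hbox & HDs) Hclash Hinv Hkids]; subst; simpl in *.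
  - unfold atom_val; simpl; eapply Hclash; eauto.
  - intros H; apply H, HF.
  - destruct (inv_and _ _ _ _ Hinv _ _ HF) as [H | [H | H]]; [now apply Hand in H | |];
      intros [HA HB]; [apply (IHA _ _ HS H HA) | apply (IHB _ _ HS H HB)].
  - destruct (inv_or _ _ _ _ Hinv _ _ HF) as [H | [H1 H2]]; [now apply Hor in H |].
    intros [HA | HB]; [apply (IHA _ _ HS H1 HA) | apply (IHB _ _ HS H2 HB)].
  - destruct (inv_box _ _ _ _ Hinv _ HF) as [H | (k & Hk & HA)]; [now apply Hbox in H |].
    intros H; apply (IHA _ k (Hkids k Hk) HA), H, desc_kid, Hk.
  - intros (v & Hv & HA).
    destruct (saturated_desc _ _ _ v Hv HS) as (Ds' & HSv & HDs').
    apply (IHA _ v HSv); [| exact HA].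
    inversion HSv as [? ? ? ? (_ & _ & _ & Hv') _ _ _]; subst; apply Hv', HDs'.
    simpl; apply in_or_app; right; apply in_dia_args, (inv_dia _ _ _ _ Hinv), HF.
Qed.

Lemma erase_false Sg t : forall t' Ds, extends t t' -> saturated Sg Ds t' ->
  all_nodes (node_inv Sg) t -> ~ forces_seq desc atom_val t' (erase t).
Proof.
  induction t as [c h ks IH] using tree_nested_ind; intros t' Ds Hext HS Hall.
  inversion Hext as [? ? ? c' h' ks' Hh Hks]; subst.
  inversion Hall as [? ? ? Hinv Hkids]; subst.
  rewrite forces_seq_Exists, erase_node; intros (i & Hi & Hf).
  apply in_app_or in Hi as [(A & <- & HA)%in_map_iff | (k & <- & Hk)%in_map_iff].
  - apply (saturated_hist_false Sg A Ds _ HS); [apply Hh, Hinv, HA | exact Hf].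
  - inversion HS as [? ? ? ? _ _ _ HSk]; subst.
    destruct (Hks k Hk) as (k' & Hk' & Hext').
    apply (IH k Hk k' _ Hext' (HSk k' Hk') (Hkids k Hk)).
    apply Hf, desc_kid, Hk'.
Qed.

Lemma all_nodes_mono (P Q : list form -> list form -> list tree -> Prop) t :
  (forall c h ks, P c h ks -> Q c h ks) -> all_nodes P t -> all_nodes Q t.
Proof.
  intros HPQ; induction t as [c h ks IH] using tree_nested_ind.
  intros Hall; inversion Hall; subst; constructor; auto.
Qed.

Definition tree_presentable (s : sequent) : Prop :=
  exists t L, seq_equiv (erase t) s /\ all_nodes (fun c h _ => c = h /\ incl c L) t.

Lemma tree_presentable_nil : tree_presentable [].
Proof.
  exists (Node [] [] []), []; split; [constructor |].
  constructor; [split; auto using incl_refl | intros _ []].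
Qed.

Lemma tree_presentable_all s : tree_presentable s.
Proof.
  enough (H : forall i s, tree_presentable s -> tree_presentable (i :: s)).
  { induction s; auto using tree_presentable_nil. }
  apply (item_nested_ind (fun i => forall s, tree_presentable s -> tree_presentable (i :: s))
                         tree_presentable); auto using tree_presentable_nil.
  - intros A s' ([c h ks] & L & Ht & Hall); inversion_clear Hall as [? ? ? [Ech Hc] Hk]; subst h.
    exists (Node (A :: c) (A :: c) ks), (A :: L); split; [apply seq_equiv_cons, Ht |].
    constructor; [split; auto; apply incl_cons; [now left | apply incl_tl, Hc] |].
    intros k Hk'; eapply all_nodes_mono; [| apply Hk, Hk']; intros ? ? _ [? ?]; auto using incl_tl.
  - intros s0 (t0 & L0 & Ht0 & Hall0) s' ([c h ks] & L & Ht & Hall).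
    inversion_clear Hall as [? ? ? [Ech Hc] Hk]; subst h.
    exists (Node c c (t0 :: ks)), (L ++ L0); split.
    + rewrite erase_node; cbn [map].
      apply se_trans with (IB (erase t0) :: erase (Node c c ks));
        [apply Permutation_seq_equiv; symmetry; apply Permutation_middle | constructor; auto].
    + constructor; [split; auto using incl_appl |].
      intros k [<- | Hk']; eapply all_nodes_mono; try apply Hk, Hk'; try exact Hall0;
        intros ? ? _ [? ?]; auto using incl_appl, incl_appr.
Qed.


Fixpoint subformulas (A : form) : list form :=
  A :: match A with
       | And A1 A2 | Or A1 A2 => subformulas A1 ++ subformulas A2
       | Box A1 | Dia A1 => subformulas A1
       | _ => []
       end.

Lemma subformulas_refl A : In A (subformulas A).
Proof. destruct A; simpl; auto. Qed.

Lemma subformulas_trans A B D :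
  In B (subformulas A) -> In D (subformulas B) -> In D (subformulas A).
Proof.
  induction A; simpl; intros [<- | HB] HD; auto; right; rewrite ?in_app_iff in *;
    try tauto; destruct HB; eauto.
Qed.

Definition neg_closure (L : list form) : list form :=
  flat_map (fun B => subformulas B ++ map neg (subformulas B)) L.

Lemma in_neg_closure Z L : In Z (neg_closure L) <->
  exists X Y, In X L /\ In Y (subformulas X) /\ (Z = Y \/ Z = neg Y).
Proof.
  unfold neg_closure; rewrite in_flat_map; split.
  - intros (X & HX & [HZ | (Y & <- & HY)%in_map_iff]%in_app_iff); eauto 6.
  - intros (X & Y & HX & HY & [-> | ->]); exists X; rewrite in_app_iff, in_map_iff; eauto.
Qed.

Lemma incl_neg_closure L : incl L (neg_closure L).
Proof. intros A HA; apply in_neg_closure; exists A, A; auto using subformulas_refl. Qed.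

Lemma neg_closure_sub L X Y Z : In X L -> In Y (subformulas X) -> In Z (subformulas Y) ->
  In Z (neg_closure L) /\ In (neg Z) (neg_closure L).
Proof.
  intros HX HY HZ; split; apply in_neg_closure; exists X, Z; eauto using subformulas_trans.
Qed.

Ltac immediate_sub := simpl; rewrite ?in_app_iff; auto using subformulas_refl.

Lemma neg_closure_closed L : closed (neg_closure L).
Proof.
  split.
  - intros A B (X & Y & HX & HY & [<- | E])%in_neg_closure.
    + split; apply (neg_closure_sub L X (And A B)); auto; immediate_sub.
    + destruct Y; inversion E; subst.
      split; apply (neg_closure_sub L X (Or Y1 Y2)); auto; immediate_sub.
  - intros A B (X & Y & HX & HY & [<- | E])%in_neg_closure.
    + split; apply (neg_closure_sub L X (Or A B)); auto; immediate_sub.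
    + destruct Y; inversion E; subst.
      split; apply (neg_closure_sub L X (And Y1 Y2)); auto; immediate_sub.
  - intros A (X & Y & HX & HY & [<- | E])%in_neg_closure.
    + split; [apply (neg_closure_sub L X (Box A) (Box A)) | apply (neg_closure_sub L X (Box A))];
        auto; immediate_sub.
    + destruct Y; inversion E; subst; rewrite neg_involutive.
      split; [apply (neg_closure_sub L X (Dia Y)) | apply (neg_closure_sub L X (Dia Y) Y)];
        auto; immediate_sub.
  - intros A (X & Y & HX & HY & [<- | E])%in_neg_closure.
    + apply (neg_closure_sub L X (Dia A)); auto; immediate_sub.
    + destruct Y; inversion E; subst.
      apply (neg_closure_sub L X (Box Y)); auto; immediate_sub.
Qed.

Theorem mainTheorem12 : forall S : sequent, derivable true S -> derivable false S.
Proof.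
  intros S HS; apply NNPP; intros Hn.
  destruct (tree_presentable_all S) as (t & L & Het & Hall).
  assert (Hinv : all_nodes (node_inv (neg_closure L)) t).
  { eapply all_nodes_mono; [| exact Hall]; intros c h ks [<- Hc].
    apply node_inv_init; eauto using incl_tran, incl_neg_closure. }
  destruct (saturation _ (neg_closure_closed L) [] t) as (t' & Hext & Hsat & _);
    [intros _ [] | exact Hinv | intros H; apply Hn; eapply derivable_equiv; eauto |].
  apply (erase_false _ t t' [] Hext Hsat Hinv).
  apply (forces_seq_equiv _ _ S (erase t) (seq_equiv_sym _ _ Het)).
  apply (derivable_sound desc atom_val desc_trans desc_conv_wf true S HS).
Qed.
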